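(* Consider a finite tabular MDP with a unique optimal policy $\pi^*$ in which $d_\rho^\pi(s)\ge d_{\min}>0$ for all states $s$ and all full-support policies $\pi$. Let $\pi_t$ be generated by the discrete EG update $\pi_{t+1}(a|s)=\pi_t(a|s)e^{\eta[U^t_a(s)]_+}/Z^t_s$ with a sufficiently small constant step size $\eta>0$ (as required for $\pi_t\to\pi^*$). Then $\delta_t:=V^*-V(\pi_t)$ satisfies $\delta_t=O(1/t)$.
   Context: A finite MDP $(\mathcal S,\mathcal A,P,r,\gamma,\rho)$ with $r(s,a)\in[0,1]$, $\gamma\in[0,1)$; tabular softmax policies $\pi_\theta(a|s)=e^{\theta(s,a)}/\sum_{a'}e^{\theta(s,a')}$. $V^\pi,Q^\pi$ are the discounted state- and action-value functions, $V(\pi)=\mathbb{E}_{s\sim\rho}V^\pi(s)$, $V^*=V(\pi^* )$, $d_\rho^\pi(s)=(1-\gamma)\sum_{t\ge0}\gamma^t\Pr(s_t=s\mid\rho,\pi)$. $U^t_a(s):=Q^{\pi_t}(s,a)-V^{\pi_t}(s)$, $[x]_+=\max(x,0)$, $Z^t_s:=\sum_{a'}\pi_t(a'|s)e^{\eta[U^t_{a'}(s)]_+}$. *)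

From HB Require Import structures.
From mathcomp Require Import all_boot all_order all_algebra.
From mathcomp Require Import all_classical all_reals all_analysis.
Set Implicit Arguments. Unset Strict Implicit. Unset Printing Implicit Defensive.
Import Order.TTheory GRing.Theory Num.Theory.
Local Open Scope ring_scope.

Section MDP.
Variables (R : realType) (S A : finType).
(* transition kernel P s a s' = P(s'|s,a), reward r, discount gamma *)
Variables (P : S -> A -> S -> R) (r : S -> A -> R) (gamma : R).

Definition rseries (u : nat -> R) : R := limn (fun n => \sum_(0 <= t < n) u t).

(* a (stochastic, tabular) policy: pi s a = pi(a|s) *)
Definition policy := S -> A -> R.

Definition is_policy (pi : policy) : Prop :=
  forall s, (forall a, 0 <= pi s a) /\ \sum_a pi s a = 1.

Definition full_support (pi : policy) : Prop :=
  is_policy pi /\ forall s a, 0 < pi s a.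

Definition softmax (theta : S -> A -> R) : policy :=
  fun s a => expR (theta s a) / \sum_a' expR (theta s a').

Fixpoint state_dist (pi : policy) (mu : S -> R) (t : nat) : S -> R :=
  match t with
  | 0 => mu
  | t'.+1 => fun s' => \sum_s state_dist pi mu t' s * \sum_a pi s a * P s a s'
  end.

Definition dirac (s : S) : S -> R := fun s' => (s' == s)%:R.

Definition Vf (pi : policy) (s : S) : R :=
  rseries (fun t => gamma ^+ t *
     \sum_s' state_dist pi (dirac s) t s' * \sum_a pi s' a * r s' a).

Definition Qf (pi : policy) (s : S) (a : A) : R :=
  r s a + gamma * \sum_s' P s a s' * Vf pi s'.

Definition Vrho (rho : S -> R) (pi : policy) : R := \sum_s rho s * Vf pi s.

Definition dvisit (rho : S -> R) (pi : policy) (s : S) : R :=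
  (1 - gamma) * rseries (fun t => gamma ^+ t * state_dist pi rho t s).

Definition Uf (pi : policy) (s : S) (a : A) : R := Qf pi s a - Vf pi s.

Definition optimal (pis : policy) : Prop :=
  is_policy pis /\ forall pi, is_policy pi -> forall s, Vf pi s <= Vf pis s.

Definition eg_step (eta : R) (pi : policy) : policy :=
  fun s a => pi s a * expR (eta * Num.max (Uf pi s a) 0) /
             \sum_a' pi s a' * expR (eta * Num.max (Uf pi s a') 0).

Definition eg_iter (eta : R) (pi0 : policy) (t : nat) : policy :=
  iter t (eg_step eta) pi0.

End MDP.

(* The EG step never lowers a state value: its one-step gain at [s] is
   [eg_h / Z >= 0], where [eg_h] averages [(exp (eta U+) - 1) U+], so the
   policy-improvement lemma makes [V (pi_t)] nondecreasing, with a limit.  Every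
   limiting advantage is [<= 0]: a positive one would keep the probability of its
   action from decreasing, hence the gain away from [0].  So the limit is [V*],
   and by uniqueness of [pi*] the advantages of the non-optimal actions become
   negative; from then on the probability of the optimal action only grows and
   stays above some [p > 0].  If [m] is the largest positive advantage at time
   [t], then [(1 - gamma) delta_t <= m], while the performance-difference identity
   and [d_rho >= dmin] give
   [(1 - gamma) (delta_t - delta_(t+1)) >= dmin * gain >= dmin p eta m^2 / Zmax].
   Hence [delta_(t+1) <= delta_t - k delta_t^2], which forces [delta_t = O(1/t)]. *)

From Pilot Require Import Defs.
From HB Require Import structures.
From mathcomp Require Import all_boot all_order all_algebra.
From mathcomp Require Import all_classical all_reals all_analysis.
From mathcomp Require Import ring lra zify.
Import Order.TTheory GRing.Theory Num.Theory numFieldNormedType.Exports.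
Set Implicit Arguments. Unset Strict Implicit. Unset Printing Implicit Defensive.
Local Open Scope ring_scope.
Local Open Scope classical_set_scope.

Section RealFacts.
Variable R : realType.

Lemma geometric_sum_le (g : R) n :
  0 <= g < 1 -> \sum_(0 <= t < n) g ^+ t <= (1 - g)^-1.
Proof.
move=> /andP[g0 g1].
have g1pos : 0 < 1 - g by rewrite subr_gt0.
have geo m : (1 - g) * \sum_(0 <= t < m) g ^+ t = 1 - g ^+ m.
  elim: m => [|m IH]; first by rewrite big_geq // mulr0 expr0 subrr.
  by rewrite big_nat_recr //= mulrDr IH exprSr; ring.
rewrite -(ler_pM2l g1pos) geo mulfV ?gt_eqF // lerBlDr lerDl.
exact: exprn_ge0.
Qed.

Lemma is_cvg_series_ge0_bounded (u : nat -> R) (B : R) : (forall t, 0 <= u t) ->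
  (forall n, \sum_(0 <= t < n) u t <= B) -> cvgn (fun n => \sum_(0 <= t < n) u t).
Proof.
move=> u0 uB; apply: cvgP; apply: nondecreasing_cvgn.
- move=> m n mn /=; rewrite (big_cat_nat (leq0n m) mn) /= lerDl.
  by apply: sumr_ge0 => i _.
- by exists B => _ [n _ <-].
Qed.

Lemma cvg_fsum (I : finType) (f : I -> nat -> R) (l : I -> R) :
  (forall i, f i @ \oo --> l i) -> (fun n => \sum_i f i n) @ \oo --> \sum_i l i.
Proof. by move=> fl; apply: cvg_big => //; exact: add_continuous. Qed.

Lemma nearinfty_ex (Q : nat -> Prop) : (\forall t \near \oo, Q t) ->
  exists N, forall t, (N <= t)%N -> Q t.
Proof. by move=> [N _ QN]; exists N => t Nt; exact: QN. Qed.

Lemma nondecreasing_from (u : nat -> R) N :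
  (forall t, (N <= t)%N -> u t <= u t.+1) -> forall t, (N <= t)%N -> u N <= u t.
Proof.
move=> uS t /subnKC <-; elim: (t - N)%N => [|n IH]; first by rewrite addn0.
by rewrite addnS; apply: le_trans IH (uS _ (leq_addr n N)).
Qed.

Lemma expR_ge1 (x : R) : 0 <= x -> 1 <= expR x.
Proof. by move=> x0; apply: le_trans (expR_ge1Dx x); rewrite lerDl. Qed.

Lemma finite_argmax (I : finType) (f : I -> R) (i0 : I) :
  exists j, forall i, f i <= f j.
Proof.
by case: (@arg_maxP _ _ I i0 predT f isT) => j _ fj; exists j => i; exact: fj.
Qed.

Lemma finite_pos_lower_bound (I : finType) (f : I -> R) :
  (forall i, 0 < f i) -> exists2 p, 0 < p & forall i, p <= f i.
Proof.
move=> f_gt0; case: (pickP (@predT I)) => [i0 _|I0]; last first.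
  by exists 1 => // i; have := I0 i.
have [j fj] := finite_argmax (fun i => - f i) i0.
by exists (f j) => // i; rewrite -lerN2; exact: fj.
Qed.

Lemma discounted_max_principle (I : finType) (k : I -> I -> R) (W : I -> R)
    (g m : R) :
  0 <= g < 1 -> (forall i j, 0 <= k i j) -> (forall i, \sum_j k i j = 1) ->
  (forall i, W i <= m + g * \sum_j k i j * W j) -> forall i, (1 - g) * W i <= m.
Proof.
move=> /andP[g0 g1] k0 k1 W_le i.
have [j Wj] := finite_argmax W i.
have Wj_le : W j <= m + g * W j.
  apply: (le_trans (W_le j)); rewrite lerD2l ler_wpM2l //.
  rewrite -[X in _ <= X]mul1r -(k1 j) mulr_suml; apply: ler_sum => i' _.
  exact: ler_wpM2l.
have g1' : 0 <= 1 - g by rewrite subr_ge0 ltW.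
apply: (le_trans (ler_wpM2l g1' (Wj i))); lra.
Qed.

Lemma quadratic_decrease_step (x x' m k : R) : 0 <= x -> 0 <= x' -> 0 <= m ->
  0 < k -> x * (m * k) <= 1 -> x' <= x - k * x ^+ 2 -> x' * ((m + 1) * k) <= 1.
Proof.
move=> x0 x'0 m0 k0 xmk x'_le.
have mk0 : 0 <= (m + 1) * k by apply: mulr_ge0; [lra | exact: ltW].
apply: le_trans (ler_wpM2r mk0 x'_le) _.
pose y := k * x.
have y0 : 0 <= y by apply: mulr_ge0 => //; exact: ltW.
have -> : (x - k * x ^+ 2) * ((m + 1) * k) = (m + 1) * (y - y ^+ 2)
  by rewrite /y; ring.
have my : m * y <= 1.
  suff -> : m * y = x * (m * k) by [].
  by rewrite /y; ring.
have [y1|y1] := leP y 1; last first.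
  have : y - y ^+ 2 <= 0 by rewrite expr2; nra.
  nra.
have : (m * y) * (1 - y) <= 1 - y by rewrite -[X in _ <= X]mul1r ler_wpM2r //; lra.
have -> : (m + 1) * (y - y ^+ 2) = (m * y) * (1 - y) + y * (1 - y) by ring.
nra.
Qed.

Lemma quadratic_decrease_rate (d : nat -> R) (k B : R) (T : nat) : 0 < k ->
  (forall t, 0 <= d t) -> (forall t, d t <= B) ->
  (forall t, (T <= t)%N -> d t.+1 <= d t - k * d t ^+ 2) ->
  exists C, forall t, (0 < t)%N -> d t <= C / t%:R.
Proof.
move=> k0 d0 dB d_dec.
have dk n : d (T + n)%N * (n%:R * k) <= 1.
  elim: n => [|n IH]; first by rewrite mul0r mulr0 ler01.
  rewrite addnS -natr1; apply: (quadratic_decrease_step _ _ _ k0 IH) => //.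
  exact: d_dec (leq_addr n T).
have B0 : 0 <= B by apply: le_trans (d0 0%N) (dB 0%N).
have k'0 : 0 <= 2 / k by apply: divr_ge0 => //; exact: ltW.
(* For [t <= 2 T] use [d <= B]; otherwise [t <= 2 (t - T)] and [dk] apply. *)
exists ((2 * T)%:R * B + 2 / k) => t t0.
have t_gt0 : 0 < t%:R :> R by rewrite ltr0n.
have TB0 : 0 <= (2 * T)%:R * B by apply: mulr_ge0.
rewrite ler_pdivlMr //.
have [tT|Tt] := leqP t (2 * T).
  have : d t * t%:R <= (2 * T)%:R * B.
    by rewrite mulrC; apply: ler_pM => //; rewrite ler_nat.
  lra.
pose n := (t - T)%N.
have tn : t = (T + n)%N by rewrite subnKC //; lia.
have : d t * t%:R <= (2 / k) * (d t * (n%:R * k)).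
  have -> : (2 / k) * (d t * (n%:R * k)) = d t * (2 * n)%:R.
    by rewrite natrM; field; rewrite gt_eqF.
  by apply: ler_wpM2l => //; rewrite ler_nat; lia.
have : (2 / k) * (d t * (n%:R * k)) <= 2 / k by apply: ler_piMr => //; rewrite tn.
lra.
Qed.

End RealFacts.

Section MDP.
Variables (R : realType) (S A : finType).
Variables (P : S -> A -> S -> R) (r : S -> A -> R) (gamma : R).
Hypothesis P_ge0 : forall s a s', 0 <= P s a s'.
Hypothesis P_sum1 : forall s a, \sum_s' P s a s' = 1.
Hypothesis r_01 : forall s a, 0 <= r s a <= 1.
Hypothesis gamma_01 : 0 <= gamma < 1.

Local Notation V := (Vf P r gamma).
Local Notation Q := (Qf P r gamma).
Local Notation U := (Uf P r gamma).
Local Notation dirac := (@Defs.dirac R S).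

Definition Ppi (pi : policy R S A) s s' := \sum_a pi s a * P s a s'.
Definition rpi (pi : policy R S A) s := \sum_a pi s a * r s a.

Lemma gamma_ge0 : 0 <= gamma.
Proof. by case/andP: gamma_01. Qed.

Lemma one_sub_gamma_gt0 : 0 < 1 - gamma.
Proof. by case/andP: gamma_01 => _; rewrite subr_gt0. Qed.

Lemma Ppi_ge0 pi : is_policy pi -> forall s s', 0 <= Ppi pi s s'.
Proof.
move=> hpi s s'; apply: sumr_ge0 => a _; apply: mulr_ge0 => //.
by case: (hpi s).
Qed.

Lemma Ppi_sum1 pi : is_policy pi -> forall s, \sum_s' Ppi pi s s' = 1.
Proof.
move=> hpi s; rewrite /Ppi exchange_big /= -[RHS](proj2 (hpi s)).
by apply: eq_bigr => a _; rewrite -mulr_sumr P_sum1 mulr1.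
Qed.

Lemma rpi_ge0 pi s : is_policy pi -> 0 <= rpi pi s.
Proof.
move=> hpi; apply: sumr_ge0 => a _; apply: mulr_ge0; first by case: (hpi s).
by case/andP: (r_01 s a).
Qed.

Lemma rpi_le1 pi s : is_policy pi -> rpi pi s <= 1.
Proof.
move=> hpi; rewrite -(proj2 (hpi s)); apply: ler_sum => a _.
rewrite -[X in _ <= X]mulr1; apply: ler_wpM2l; first by case: (hpi s).
by case/andP: (r_01 s a).
Qed.

Lemma Ppi_max_principle pi (W : S -> R) m : is_policy pi ->
  (forall s, W s <= m + gamma * \sum_s' Ppi pi s s' * W s') ->
  forall s, (1 - gamma) * W s <= m.
Proof.
by move=> hpi; apply: discounted_max_principle gamma_01 (Ppi_ge0 hpi) (Ppi_sum1 hpi).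
Qed.

Lemma sum_pi_Qform (W : S -> R) pi s :
  \sum_a pi s a * (r s a + gamma * \sum_s' P s a s' * W s') =
  rpi pi s + gamma * \sum_s' Ppi pi s s' * W s'.
Proof.
under eq_bigr do rewrite mulrDr.
rewrite big_split /=; congr (_ + _).
under eq_bigr do rewrite mulrCA mulr_sumr.
rewrite -mulr_sumr exchange_big /=; congr (_ * _); apply: eq_bigr => s' _.
by rewrite /Ppi mulr_suml; apply: eq_bigr => a _; rewrite mulrA.
Qed.

Lemma dirac_ge0 s s' : 0 <= dirac s s'.
Proof. exact: ler0n. Qed.

Lemma dirac_sum1 s : \sum_s' dirac s s' = 1.
Proof. by rewrite (bigD1 s) //= /Defs.dirac eqxx big1 ?addr0 // => s' /negbTE ->. Qed.

Lemma sum_dirac_mul (f : S -> R) s : \sum_s' dirac s s' * f s' = f s.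
Proof.
rewrite (bigD1 s) //= /Defs.dirac eqxx mul1r big1 ?addr0 // => s' /negbTE ->.
by rewrite mul0r.
Qed.

Lemma state_dist_ge0 pi mu : is_policy pi -> (forall s, 0 <= mu s) ->
  forall t s, 0 <= state_dist P pi mu t s.
Proof.
move=> hpi mu0; elim=> [|t IH] s //=.
by apply: sumr_ge0 => s0 _; apply: mulr_ge0 => //; exact: Ppi_ge0.
Qed.

Lemma state_dist_sum pi mu : is_policy pi ->
  forall t, \sum_s state_dist P pi mu t s = \sum_s mu s.
Proof.
move=> hpi; elim=> [|t IH] //=.
rewrite exchange_big /= -IH; apply: eq_bigr => s _.
by rewrite -mulr_sumr (Ppi_sum1 hpi) mulr1.
Qed.

Lemma state_distSr pi mu t s' : state_dist P pi mu t.+1 s' =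
  state_dist P pi (fun s1 => \sum_s mu s * Ppi pi s s1) t s'.
Proof.
elim: t s' => [|t IH] s' //.
transitivity (\sum_s state_dist P pi mu t.+1 s * Ppi pi s s') => //.
by rewrite [RHS]/=; apply: eq_bigr => s _; rewrite IH.
Qed.

Lemma state_dist_linear pi mu t s' :
  state_dist P pi mu t s' = \sum_s mu s * state_dist P pi (dirac s) t s'.
Proof.
elim: t s' => [|t IH] s' /=.
  rewrite (bigD1 s') //= /Defs.dirac eqxx mulr1 big1 ?addr0 // => s /negbTE.
  by rewrite eq_sym => ->; rewrite mulr0.
under eq_bigr do rewrite IH mulr_suml.
rewrite exchange_big /=; apply: eq_bigr => s _.
by rewrite mulr_sumr; apply: eq_bigr => s1 _; rewrite mulrA.
Qed.

Definition Vterm pi s t :=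
  gamma ^+ t * \sum_s' state_dist P pi (dirac s) t s' * rpi pi s'.

Definition Vpartial pi s n := \sum_(0 <= t < n) Vterm pi s t.

Lemma Vterm_ge0 pi s t : is_policy pi -> 0 <= Vterm pi s t.
Proof.
move=> hpi; apply: mulr_ge0; first exact: exprn_ge0 gamma_ge0.
apply: sumr_ge0 => s' _; apply: mulr_ge0; last exact: rpi_ge0.
by apply: state_dist_ge0 => //; exact: dirac_ge0.
Qed.

Lemma Vterm_le pi s t : is_policy pi -> Vterm pi s t <= gamma ^+ t.
Proof.
move=> hpi; rewrite -[X in _ <= X]mulr1; apply: ler_wpM2l.
  exact: exprn_ge0 gamma_ge0.
rewrite -(dirac_sum1 s) -(state_dist_sum (dirac s) hpi t); apply: ler_sum => s' _.
rewrite -[X in _ <= X]mulr1; apply: ler_wpM2l; last exact: rpi_le1.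
by apply: state_dist_ge0 => //; exact: dirac_ge0.
Qed.

Lemma Vpartial_cvg pi s : is_policy pi -> Vpartial pi s @ \oo --> V pi s.
Proof.
move=> hpi; apply: (is_cvg_series_ge0_bounded (B := (1 - gamma)^-1)).
  by move=> t; exact: Vterm_ge0.
move=> n; apply: le_trans (geometric_sum_le n gamma_01).
by apply: ler_sum => t _; exact: Vterm_le.
Qed.

Lemma VtermS pi s t :
  Vterm pi s t.+1 = gamma * \sum_s1 Ppi pi s s1 * Vterm pi s1 t.
Proof.
rewrite /Vterm exprS -mulrA; congr (_ * _).
under [RHS]eq_bigr do rewrite mulrCA.
rewrite -mulr_sumr; congr (_ * _).
under [RHS]eq_bigr do rewrite mulr_sumr.
rewrite exchange_big /=; apply: eq_bigr => s' _.
rewrite -[X in X * _ = _]/(state_dist P pi (dirac s) t.+1 s').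
rewrite state_distSr state_dist_linear mulr_suml; apply: eq_bigr => s1 _.
by rewrite (sum_dirac_mul (fun s0 => Ppi pi s0 s1)) mulrA.
Qed.

Lemma VpartialS pi s n :
  Vpartial pi s n.+1 = rpi pi s + gamma * \sum_s1 Ppi pi s s1 * Vpartial pi s1 n.
Proof.
rewrite /Vpartial big_nat_recl //; congr (_ + _).
  by rewrite /Vterm expr0 mul1r /= sum_dirac_mul.
under eq_bigr do rewrite VtermS.
rewrite -mulr_sumr exchange_big /=; congr (_ * _).
by apply: eq_bigr => s1 _; rewrite mulr_sumr.
Qed.

Lemma V_bellman pi : is_policy pi ->
  forall s, V pi s = rpi pi s + gamma * \sum_s1 Ppi pi s s1 * V pi s1.
Proof.
move=> hpi s.
have VS : (fun n => Vpartial pi s n.+1) @ \oo --> V pi s.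
  by rewrite (cvg_shiftS (Vpartial pi s)); exact: Vpartial_cvg.
have VS' : (fun n => Vpartial pi s n.+1) @ \oo -->
           rpi pi s + gamma * \sum_s1 Ppi pi s s1 * V pi s1.
  under eq_fun do rewrite VpartialS.
  apply: cvgD; first exact: cvg_cst.
  apply: cvgM; first exact: cvg_cst.
  apply: cvg_fsum => s1; apply: cvgM; first exact: cvg_cst.
  exact: Vpartial_cvg.
by rewrite -(cvg_unique _ VS VS').
Qed.

Lemma sum_pi_Q pi' pi s :
  \sum_a pi s a * Q pi' s a = rpi pi s + gamma * \sum_s' Ppi pi s s' * V pi' s'.
Proof. exact: sum_pi_Qform. Qed.

Lemma V_sum_pi_Q pi : is_policy pi -> forall s, V pi s = \sum_a pi s a * Q pi s a.
Proof. by move=> hpi s; rewrite sum_pi_Q V_bellman. Qed.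

Lemma sum_pi_U pi s : is_policy pi -> \sum_a pi s a * U pi s a = 0.
Proof.
move=> hpi; rewrite /Uf; under eq_bigr do rewrite mulrBr.
by rewrite sumrB -mulr_suml (proj2 (hpi s)) mul1r -V_sum_pi_Q // subrr.
Qed.

Lemma V_ge0 pi s : is_policy pi -> 0 <= V pi s.
Proof.
move=> hpi; rewrite -(pmulr_rge0 _ one_sub_gamma_gt0) -oppr_le0 -mulrN.
apply: (Ppi_max_principle (W := fun s => - V pi s) hpi) => s1.
rewrite (V_bellman hpi s1) add0r opprD.
under [X in _ <= _ * X]eq_bigr do rewrite mulrN.
by rewrite sumrN mulrN; have := rpi_ge0 s1 hpi; lra.
Qed.

Lemma V_le pi s : is_policy pi -> V pi s <= (1 - gamma)^-1.
Proof.
move=> hpi; rewrite -(ler_pM2l one_sub_gamma_gt0) mulfV ?gt_eqF ?one_sub_gamma_gt0 //.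
apply: (Ppi_max_principle hpi) => s1.
by rewrite (V_bellman hpi s1) lerD2r rpi_le1.
Qed.

Lemma U_le pi s a : is_policy pi -> U pi s a <= (1 - gamma)^-1.
Proof.
move=> hpi; rewrite /Uf /Qf lerBlDr.
have PV : \sum_s' P s a s' * V pi s' <= (1 - gamma)^-1.
  apply: le_trans (_ : \sum_s' P s a s' * (1 - gamma)^-1 <= _); last first.
    by rewrite -mulr_suml P_sum1 mul1r.
  by apply: ler_sum => s' _; apply: ler_wpM2l; [exact: P_ge0 | exact: V_le].
have -> : (1 - gamma)^-1 = 1 + gamma * (1 - gamma)^-1.
  by field; rewrite gt_eqF // one_sub_gamma_gt0.
have := V_ge0 s hpi; have := ler_wpM2l gamma_ge0 PV; case/andP: (r_01 s a).
lra.
Qed.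

Lemma suboptimality_le_max_U pi pi' (m : R) :
  is_policy pi' -> (forall s a, U pi s a <= m) ->
  forall s, (1 - gamma) * (V pi' s - V pi s) <= m.
Proof.
move=> hpi' Um.
apply: (Ppi_max_principle hpi') => s.
rewrite (V_bellman hpi' s).
have Vm : rpi pi' s + gamma * \sum_s' Ppi pi' s s' * V pi s' - V pi s <= m.
  have -> : V pi s = \sum_a pi' s a * V pi s.
    by rewrite -mulr_suml (proj2 (hpi' s)) mul1r.
  rewrite -sum_pi_Q -sumrB.
  apply: le_trans (_ : \sum_a pi' s a * m <= _); last first.
    by rewrite -mulr_suml (proj2 (hpi' s)) mul1r.
  apply: ler_sum => a _; rewrite -mulrBr.
  by apply: ler_wpM2l; [case: (hpi' s) | exact: Um].
under [X in _ <= _ + gamma * X]eq_bigr do rewrite mulrBr.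
rewrite sumrB; lra.
Qed.

Definition gain pi pi' s := \sum_a pi' s a * Q pi s a - V pi s.

Lemma V_diff_bellman pi pi' : is_policy pi' -> forall s, V pi' s - V pi s =
  gain pi pi' s + gamma * \sum_s1 Ppi pi' s s1 * (V pi' s1 - V pi s1).
Proof.
move=> hpi' s; rewrite /gain sum_pi_Q (V_bellman hpi' s).
under [X in _ = _ + gamma * X]eq_bigr do rewrite mulrBr.
rewrite sumrB; ring.
Qed.

Lemma policy_improvement pi pi' : is_policy pi' -> (forall s, 0 <= gain pi pi' s) ->
  forall s, gain pi pi' s <= V pi' s - V pi s.
Proof.
move=> hpi' gain0.
have W0 s : 0 <= V pi' s - V pi s.
  rewrite -(pmulr_rge0 _ one_sub_gamma_gt0) -oppr_le0 -mulrN.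
  apply: (Ppi_max_principle (W := fun s => - (V pi' s - V pi s)) hpi') => s1.
  rewrite (V_diff_bellman _ hpi' s1) add0r opprD.
  under [X in _ <= gamma * X]eq_bigr do rewrite mulrN.
  by rewrite sumrN mulrN; have := gain0 s1; lra.
move=> s; rewrite [X in _ <= X](V_diff_bellman _ hpi' s) lerDl.
apply: mulr_ge0 gamma_ge0 _; apply: sumr_ge0 => s1 _.
by apply: mulr_ge0 => //; exact: Ppi_ge0.
Qed.

Lemma V_diff_unroll (rho : S -> R) pi pi' : is_policy pi' -> forall n,
  \sum_s rho s * (V pi' s - V pi s) =
  \sum_(0 <= t < n) gamma ^+ t * \sum_s state_dist P pi' rho t s * gain pi pi' s
  + gamma ^+ n * \sum_s state_dist P pi' rho n s * (V pi' s - V pi s).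
Proof.
move=> hpi'; pose mu := state_dist P pi' rho; pose W s := V pi' s - V pi s.
have muW n : \sum_s mu n s * W s =
    \sum_s mu n s * gain pi pi' s + gamma * \sum_s mu n.+1 s * W s.
  under eq_bigr do rewrite /W V_diff_bellman // mulrDr.
  rewrite big_split /=; congr (_ + _).
  under eq_bigr do rewrite mulrCA.
  rewrite -mulr_sumr; congr (_ * _).
  under [LHS]eq_bigr do rewrite mulr_sumr.
  rewrite exchange_big /=; apply: eq_bigr => s1 _.
  by rewrite /mu /= mulr_suml; apply: eq_bigr => s _; rewrite mulrA.
elim=> [|n IH]; first by rewrite big_geq // add0r expr0 mul1r.
rewrite IH big_nat_recr //= -addrA -/mu -/W muW exprSr; congr (_ + _); ring.
Qed.

(* Keep only the [s0] terms of the unrolled sums and drop the nonnegative tail. *)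
Lemma dvisit_mul_gain_le (rho : S -> R) pi pi' s0 :
  (forall s, 0 <= rho s) -> \sum_s rho s = 1 ->
  is_policy pi' -> (forall s, 0 <= gain pi pi' s) ->
  dvisit P gamma rho pi' s0 * gain pi pi' s0 <=
  (1 - gamma) * (Vrho P r gamma rho pi' - Vrho P r gamma rho pi).
Proof.
move=> rho0 rho1 hpi' gain0.
pose mu := state_dist P pi' rho.
have mu0 t s : 0 <= mu t s by exact: state_dist_ge0.
pose D n := \sum_(0 <= t < n) gamma ^+ t * mu t s0.
have D_le n : D n * gain pi pi' s0 <= \sum_s rho s * (V pi' s - V pi s).
  rewrite (V_diff_unroll _ _ hpi' n) mulr_suml -[X in X <= _]addr0; apply: lerD.
    apply: ler_sum => t _; rewrite -mulrA; apply: ler_wpM2l.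
      exact: exprn_ge0 gamma_ge0.
    by rewrite (bigD1 s0) //= lerDl; apply: sumr_ge0 => s _; exact: mulr_ge0.
  apply: mulr_ge0; first exact: exprn_ge0 gamma_ge0.
  apply: sumr_ge0 => s _; apply: mulr_ge0 => //.
  exact: le_trans (gain0 s) (policy_improvement hpi' gain0 s).
have D_cvg : cvgn D.
  apply: (is_cvg_series_ge0_bounded (B := (1 - gamma)^-1)).
    by move=> t; apply: mulr_ge0 => //; exact: exprn_ge0 gamma_ge0.
  move=> n; apply: le_trans (geometric_sum_le n gamma_01); apply: ler_sum => t _.
  rewrite -[X in _ <= X]mulr1; apply: ler_wpM2l; first exact: exprn_ge0 gamma_ge0.
  rewrite -rho1 -(state_dist_sum rho hpi' t) (bigD1 s0) //= lerDl.
  by apply: sumr_ge0 => s _.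
rewrite /Vrho -sumrB (eq_bigr (fun s => rho s * (V pi' s - V pi s))); last first.
  by move=> s _; rewrite mulrBr.
rewrite /dvisit -mulrA; apply: ler_wpM2l; first exact: ltW one_sub_gamma_gt0.
have Dgain : (fun n => D n * gain pi pi' s0) @ \oo --> limn D * gain pi pi' s0.
  by apply: cvgM; [exact: D_cvg | exact: cvg_cst].
rewrite -(cvg_lim _ Dgain) //; apply: limr_le; first exact: cvgP Dgain.
by apply: nearW => n; exact: D_le.
Qed.

Definition switch (pi : policy R S A) s0 a0 : policy R S A :=
  fun s a => if s == s0 then (a == a0)%:R else pi s a.

Lemma switch_policy pi s0 a0 : is_policy pi -> is_policy (switch pi s0 a0).
Proof.
move=> hpi s; rewrite /switch; case: eqP => _; last exact: hpi.
split=> [a|]; first exact: ler0n.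
by rewrite (bigD1 a0) //= eqxx big1 ?addr0 // => a /negbTE ->.
Qed.

Lemma gain_switch pi s0 a0 s : is_policy pi ->
  gain pi (switch pi s0 a0) s = if s == s0 then U pi s0 a0 else 0.
Proof.
move=> hpi; rewrite /gain /switch; case: eqP => [->|_].
  rewrite (bigD1 a0) //= eqxx mul1r big1 ?addr0 // => a /negbTE ->.
  by rewrite mul0r.
by rewrite -V_sum_pi_Q // subrr.
Qed.

Section Optimal.
Variable pistar : policy R S A.
Hypothesis pistar_opt : optimal P r gamma pistar.
Hypothesis pistar_unique :
  forall pi, optimal P r gamma pi -> forall s a, pi s a = pistar s a.

Lemma U_opt_le0 s a : U pistar s a <= 0.
Proof.
rewrite leNgt; apply/negP => U_gt0.
have hps := pistar_opt.1; have hsw := switch_policy s a hps.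
have gain0 s1 : 0 <= gain pistar (switch pistar s a) s1.
  by rewrite gain_switch //; case: ifP => // _; exact: ltW.
have := policy_improvement hsw gain0 s; rewrite gain_switch // eqxx.
by have := pistar_opt.2 _ hsw s; lra.
Qed.

Lemma U_opt_eq0_deterministic s a : U pistar s a = 0 ->
  forall b, pistar s b = (b == a)%:R.
Proof.
move=> U0 b.
have hps := pistar_opt.1; have hsw := switch_policy s a hps.
have gain0 s1 : 0 <= gain pistar (switch pistar s a) s1.
  by rewrite gain_switch //; case: ifP => // _; rewrite U0.
have sw_opt : optimal P r gamma (switch pistar s a).
  split=> // pi hpi s1; apply: le_trans (pistar_opt.2 _ hpi s1) _.
  by have := le_trans (gain0 s1) (policy_improvement hsw gain0 s1); lra.
by rewrite -(pistar_unique sw_opt s b) /switch eqxx.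
Qed.

(* An action in the support of [pistar] has zero advantage, and two such actions
   would make [pistar s] equal to two different point masses. *)
Lemma opt_action_gap s : exists a, forall b, b != a -> U pistar s b < 0.
Proof.
have hps := pistar_opt.1.
have [a Ua] : exists a, U pistar s a = 0.
  have [a pa] : exists a, pistar s a != 0.
    apply/existsP; apply: contraTT (oner_neq0 R) => /existsPn pi0.
    by rewrite -(proj2 (hps s)) big1 ?eqxx // => a _; apply/eqP/negPn; exact: pi0.
  have nn b : 0 <= - (pistar s b * U pistar s b).
    rewrite -mulrN; apply: mulr_ge0; first by case: (hps s).
    by rewrite oppr_ge0 U_opt_le0.
  have sum0 : \sum_b - (pistar s b * U pistar s b) = 0.
    by rewrite sumrN sum_pi_U ?oppr0.
  exists a; have /eqP := psumr_eq0P (fun b _ => nn b) sum0 (i := a) isT.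
  by rewrite oppr_eq0 mulf_eq0 (negbTE pa) => /eqP.
exists a => b ba; rewrite lt_neqAle U_opt_le0 andbT; apply/eqP => Ub.
have := U_opt_eq0_deterministic Ua a; rewrite (U_opt_eq0_deterministic Ub a).
by rewrite eqxx eq_sym (negbTE ba) => /eqP; rewrite eqr_nat.
Qed.

End Optimal.

Lemma policy_card_actions_gt0 (pi : policy R S A) : is_policy pi -> S -> (0 < #|A|)%N.
Proof.
move=> hpi s; rewrite lt0n; apply: contra_eqN (proj2 (hpi s)) => /eqP/card0_eq A0.
by rewrite big_pred0 // eq_sym oner_eq0.
Qed.

Lemma softmax_full_support (theta : S -> A -> R) :
  (S -> (0 < #|A|)%N) -> full_support (softmax theta).
Proof.
move=> A_gt0.
have Z_gt0 s : 0 < \sum_a' expR (theta s a').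
  case/card_gt0P: (A_gt0 s) => a0 _; rewrite (bigD1 a0) //=.
  by rewrite ltr_pwDl ?expR_gt0 // sumr_ge0 // => a _; exact: expR_ge0.
have pos s a : 0 < softmax theta s a by apply: divr_gt0 => //; exact: expR_gt0.
split=> // s; split=> [a|]; first exact: ltW.
by rewrite /softmax -mulr_suml mulfV ?gt_eqF.
Qed.

Section ExponentiatedGradient.
Variable eta : R.
Hypothesis eta_gt0 : 0 < eta.

Local Notation eg_step := (eg_step P r gamma eta).

Definition Uplus pi s a := Num.max (U pi s a) 0.
Definition eg_weight pi s a := expR (eta * Uplus pi s a).
Definition eg_Z pi s := \sum_b pi s b * eg_weight pi s b.
Definition eg_h pi s := \sum_b pi s b * ((eg_weight pi s b - 1) * Uplus pi s b).
Definition Zmax := expR (eta * (1 - gamma)^-1).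

Lemma Uplus_ge0 pi s a : 0 <= Uplus pi s a.
Proof. by rewrite /Uplus le_max lexx orbT. Qed.

Lemma U_le_Uplus pi s a : U pi s a <= Uplus pi s a.
Proof. by rewrite /Uplus le_max lexx. Qed.

Lemma eg_weight_ge1 pi s a : 1 <= eg_weight pi s a.
Proof. by apply: expR_ge1; apply: mulr_ge0; [exact: ltW | exact: Uplus_ge0]. Qed.

Lemma eg_Z_gt0 pi s : is_policy pi -> 0 < eg_Z pi s.
Proof.
move=> hpi; apply: lt_le_trans ltr01 _; rewrite -(proj2 (hpi s)).
apply: ler_sum => b _; rewrite -[X in X <= _]mulr1.
by apply: ler_wpM2l; [case: (hpi s) | exact: eg_weight_ge1].
Qed.

Lemma eg_Z_le pi s m : is_policy pi -> (forall b, Uplus pi s b <= m) ->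
  eg_Z pi s <= expR (eta * m).
Proof.
move=> hpi Um; rewrite -[X in _ <= X]mul1r -(proj2 (hpi s)) mulr_suml.
apply: ler_sum => b _; apply: ler_wpM2l; first by case: (hpi s).
by rewrite ler_expR ler_pM2l.
Qed.

Lemma eg_Z_le_Zmax pi s : is_policy pi -> eg_Z pi s <= Zmax.
Proof.
move=> hpi; apply: eg_Z_le => // b; rewrite ge_max U_le //.
by rewrite invr_ge0 ltW // one_sub_gamma_gt0.
Qed.

Lemma Zmax_gt0 : 0 < Zmax.
Proof. exact: expR_gt0. Qed.

Lemma eg_stepE pi s a : eg_step pi s a = pi s a * eg_weight pi s a / eg_Z pi s.
Proof. by []. Qed.

Lemma eg_step_policy pi : is_policy pi -> is_policy (eg_step pi).
Proof.
move=> hpi s; split=> [a|].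
  rewrite eg_stepE; apply: divr_ge0; last exact: ltW (eg_Z_gt0 s hpi).
  by apply: mulr_ge0; [case: (hpi s) | exact: expR_ge0].
by rewrite /= -mulr_suml mulfV // gt_eqF // (eg_Z_gt0 s hpi).
Qed.

Lemma eg_step_full_support pi : full_support pi -> full_support (eg_step pi).
Proof.
move=> [hpi pi_gt0]; split; first exact: eg_step_policy.
move=> s a; rewrite eg_stepE; apply: divr_gt0; last exact: eg_Z_gt0.
by apply: mulr_gt0 => //; exact: expR_gt0.
Qed.

Lemma eg_step_ge pi s a : is_policy pi -> eg_Z pi s <= eg_weight pi s a ->
  pi s a <= eg_step pi s a.
Proof.
move=> hpi Zw; rewrite eg_stepE ler_pdivlMr ?eg_Z_gt0 //.
by apply: ler_wpM2l => //; case: (hpi s).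
Qed.

Lemma eg_h_ge0 pi s : is_policy pi -> 0 <= eg_h pi s.
Proof.
move=> hpi; apply: sumr_ge0 => b _; apply: mulr_ge0; first by case: (hpi s).
apply: mulr_ge0; last exact: Uplus_ge0.
by rewrite subr_ge0; exact: eg_weight_ge1.
Qed.

(* The advantages average to zero under [pi], and [eg_weight - 1] vanishes
   wherever [U] and [Uplus] differ. *)
Lemma gain_eg_step pi s : is_policy pi ->
  gain pi (eg_step pi) s = eg_h pi s / eg_Z pi s.
Proof.
move=> hpi.
have wU b : (eg_weight pi s b - 1) * U pi s b = (eg_weight pi s b - 1) * Uplus pi s b.
  rewrite /eg_weight /Uplus maxEle; case: ifP => // _.
  by rewrite mulr0 expR0 subrr !mul0r.
transitivity (\sum_a eg_step pi s a * U pi s a).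
  rewrite /gain /Uf; under [RHS]eq_bigr do rewrite mulrBr.
  by rewrite sumrB -mulr_suml (proj2 (eg_step_policy hpi s)) mul1r.
under eq_bigr do rewrite eg_stepE mulrAC.
rewrite -mulr_suml; congr (_ / _).
transitivity (\sum_b (pi s b * ((eg_weight pi s b - 1) * Uplus pi s b)
                     + pi s b * U pi s b)).
  by apply: eq_bigr => b _; rewrite -wU; ring.
by rewrite big_split /= sum_pi_U // addr0.
Qed.

Lemma eg_h_div_Zmax_le_gain pi s : is_policy pi ->
  eg_h pi s / Zmax <= gain pi (eg_step pi) s.
Proof.
move=> hpi; rewrite gain_eg_step //; apply: ler_wpM2l; first exact: eg_h_ge0.
by rewrite lef_pV2 ?posrE ?Zmax_gt0 ?eg_Z_gt0 // eg_Z_le_Zmax.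
Qed.

Lemma gain_eg_step_ge0 pi s : is_policy pi -> 0 <= gain pi (eg_step pi) s.
Proof.
move=> hpi; apply: le_trans (eg_h_div_Zmax_le_gain s hpi).
by apply: divr_ge0; [exact: eg_h_ge0 | exact: ltW Zmax_gt0].
Qed.

Lemma eg_h_div_Zmax_le_V_diff pi s : is_policy pi ->
  eg_h pi s / Zmax <= V (eg_step pi) s - V pi s.
Proof.
move=> hpi; apply: le_trans (eg_h_div_Zmax_le_gain s hpi) _.
apply: policy_improvement; first exact: eg_step_policy.
by move=> s1; exact: gain_eg_step_ge0.
Qed.

(* Split the actions according to whether [Uplus] exceeds [c]. *)
Lemma eg_Z_sub1_le pi s c : is_policy pi -> 0 < c ->
  eg_Z pi s - 1 <= (expR (eta * c) - 1) + c^-1 * eg_h pi s.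
Proof.
move=> hpi c0.
have sum_pi_mul x : \sum_b pi s b * x = x by rewrite -mulr_suml (proj2 (hpi s)) mul1r.
rewrite -{1}[1](sum_pi_mul 1) /eg_Z -sumrB -{1}[_ - 1]sum_pi_mul /eg_h mulr_sumr.
rewrite -big_split /=; apply: ler_sum => b _.
rewrite -mulrBr mulrCA -mulrDr; apply: ler_wpM2l; first by case: (hpi s).
have w1 := eg_weight_ge1 pi s b; have U0 := Uplus_ge0 pi s b.
have [Uc|Uc] := leP (Uplus pi s b) c.
  have : eg_weight pi s b <= expR (eta * c) by rewrite ler_expR ler_pM2l.
  have : 0 <= c^-1 * ((eg_weight pi s b - 1) * Uplus pi s b).
    by apply: mulr_ge0; [rewrite invr_ge0 ltW | apply: mulr_ge0; rewrite ?subr_ge0].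
  lra.
have : eg_weight pi s b - 1 <= (eg_weight pi s b - 1) * (c^-1 * Uplus pi s b).
  rewrite -[X in X <= _]mulr1; apply: ler_wpM2l; first by rewrite subr_ge0.
  by rewrite ler_pdivlMl // mulr1 ltW.
have : 1 <= expR (eta * c) by apply: expR_ge1; apply: mulr_ge0; apply: ltW.
rewrite mulrCA; lra.
Qed.

Lemma eg_h_ge_term pi s a eps : is_policy pi -> 0 <= eps -> eps <= Uplus pi s a ->
  pi s a * ((expR (eta * eps) - 1) * eps) <= eg_h pi s.
Proof.
move=> hpi eps0 eps_le.
have pi0 b : 0 <= pi s b by case: (hpi s).
rewrite /eg_h (bigD1 a) //= -[X in X <= _]addr0; apply: lerD.
  apply: ler_wpM2l => //; apply: ler_pM => //.
    by rewrite subr_ge0 expR_ge1 // mulr_ge0 // ltW.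
  by rewrite lerD2r ler_expR ler_pM2l.
apply: sumr_ge0 => b _; apply: mulr_ge0 => //; apply: mulr_ge0; last exact: Uplus_ge0.
by rewrite subr_ge0; exact: eg_weight_ge1.
Qed.

Lemma eg_h_ge_sq pi s a : is_policy pi ->
  pi s a * (eta * Uplus pi s a ^+ 2) <= eg_h pi s.
Proof.
move=> hpi; apply: le_trans (eg_h_ge_term hpi (Uplus_ge0 _ _ _) (lexx _)).
apply: ler_wpM2l; first by case: (hpi s).
rewrite expr2 mulrA ler_wpM2r ?Uplus_ge0 //.
by rewrite lerBrDl; exact: expR_ge1Dx.
Qed.

Lemma eg_step_ge_of_max pi s a : is_policy pi ->
  (forall b, Uplus pi s b <= Uplus pi s a) -> pi s a <= eg_step pi s a.
Proof. by move=> hpi Ua; apply: eg_step_ge => //; exact: eg_Z_le. Qed.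

(* [eg_Z_sub1_le] with [c = eps / 2] gives [eg_Z <= expR (eta * eps)]. *)
Lemma eg_step_ge_of_small_h pi s a eps : is_policy pi -> 0 < eps ->
  eps <= Uplus pi s a ->
  eg_h pi s <= (expR (eta * eps) - expR (eta * (eps / 2))) * (eps / 2) ->
  pi s a <= eg_step pi s a.
Proof.
move=> hpi eps0 eps_le h_le; apply: eg_step_ge => //.
have eps2 : 0 < eps / 2 by rewrite divr_gt0.
have Z_le := eg_Z_sub1_le s hpi eps2.
have : (eps / 2)^-1 * eg_h pi s <= expR (eta * eps) - expR (eta * (eps / 2)).
  by rewrite ler_pdivrMl // mulrC.
have : expR (eta * eps) <= eg_weight pi s a by rewrite ler_expR ler_pM2l.
lra.
Qed.

Section Trajectory.
Variables (pistar pi0 : policy R S A).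
Hypothesis pistar_opt : optimal P r gamma pistar.
Hypothesis pi0_full : full_support pi0.

Local Notation pit t := (eg_iter P r gamma eta pi0 t).

Lemma eg_iter_full_support t : full_support (pit t).
Proof. by elim: t => [|t IH] //; exact: eg_step_full_support IH. Qed.

Lemma eg_iter_policy t : is_policy (pit t).
Proof. exact: (eg_iter_full_support t).1. Qed.

Lemma V_eg_iter_nondecreasing s :
  {homo (fun t => V (pit t) s) : n m / (n <= m)%N >-> n <= m}.
Proof.
apply/nondecreasing_seqP => t; rewrite -subr_ge0.
apply: le_trans (eg_h_div_Zmax_le_V_diff s (eg_iter_policy t)).
by apply: divr_ge0; [exact: eg_h_ge0 (eg_iter_policy t) | exact: ltW Zmax_gt0].
Qed.

Lemma V_eg_iter_cvg s : cvgn (fun t => V (pit t) s).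
Proof.
apply: cvgP; apply: (nondecreasing_cvgn (V_eg_iter_nondecreasing s)).
by exists (V pistar s) => _ [t _ <-]; exact: pistar_opt.2 _ (eg_iter_policy t) s.
Qed.

Definition Vlim s := limn (fun t => V (pit t) s).
Definition Ulim s a := r s a + gamma * \sum_s' P s a s' * Vlim s' - Vlim s.

Lemma U_eg_iter_cvg s a : (fun t => U (pit t) s a) @ \oo --> Ulim s a.
Proof.
apply: cvgB; last exact: V_eg_iter_cvg.
apply: cvgD; first exact: cvg_cst.
apply: cvgM; first exact: cvg_cst.
apply: cvg_fsum => s1; apply: cvgM; first exact: cvg_cst.
exact: V_eg_iter_cvg.
Qed.

Lemma eg_h_eg_iter_cvg0 s : (fun t => eg_h (pit t) s) @ \oo --> 0.
Proof.
pose dV t := Zmax * (V (pit t.+1) s - V (pit t) s).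
apply: (squeeze_cvgr (f := fun=> 0) (h := dV)).
- apply: nearW => t; have hpi := eg_iter_policy t.
  rewrite eg_h_ge0 //= /dV -ler_pdivrMl ?Zmax_gt0 // mulrC.
  exact: eg_h_div_Zmax_le_V_diff.
- exact: cvg_cst.
- rewrite /dV -(mulr0 Zmax); apply: cvgM; first exact: cvg_cst.
  rewrite -(subrr (Vlim s)); apply: cvgB; last exact: V_eg_iter_cvg.
  by rewrite (cvg_shiftS (fun t => V (pit t) s)); exact: V_eg_iter_cvg.
Qed.

(* If an action kept a positive limiting advantage, its probability would
   eventually stop decreasing, which keeps [eg_h] away from [0]. *)
Lemma Ulim_le0 s a : Ulim s a <= 0.
Proof.
rewrite leNgt; apply/negP => U_gt0.
pose eps := Ulim s a / 2.
have eps0 : 0 < eps by rewrite divr_gt0.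
have eps_lt : eps < Ulim s a by rewrite /eps; lra.
have [N1 UN1] := nearinfty_ex (cvgr_gt _ (@U_eg_iter_cvg s a) _ eps_lt).
have Uplus_ge t : (N1 <= t)%N -> eps <= Uplus (pit t) s a.
  by move=> N1t; apply: le_trans (U_le_Uplus _ _ _); exact: ltW (UN1 t N1t).
pose th := (expR (eta * eps) - expR (eta * (eps / 2))) * (eps / 2).
have th0 : 0 < th.
  by rewrite mulr_gt0 ?divr_gt0 // subr_gt0 ltr_expR ltr_pM2l //; lra.
have [N2 hN2] := nearinfty_ex (cvgr_lt _ (@eg_h_eg_iter_cvg0 s) _ th0).
pose N := maxn N1 N2.
have pit_up t : (N <= t)%N -> pit t s a <= pit t.+1 s a.
  rewrite geq_max => /andP[N1t N2t].
  apply: eg_step_ge_of_small_h (eg_iter_policy t) eps0 (Uplus_ge t N1t) _.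
  exact: ltW (hN2 t N2t).
pose K := pit N s a * ((expR (eta * eps) - 1) * eps).
have K0 : 0 < K.
  by rewrite !mulr_gt0 ?(eg_iter_full_support N).2 // subr_gt0 expR_gt1 mulr_gt0.
have [N3 hN3] := nearinfty_ex (cvgr_lt _ (@eg_h_eg_iter_cvg0 s) _ K0).
have Nt : (N <= N + N3)%N := leq_addr N3 N.
have : K <= eg_h (pit (N + N3)) s.
  have N1t : (N1 <= N + N3)%N by apply: leq_trans Nt; exact: leq_maxl.
  apply: le_trans (eg_h_ge_term (eg_iter_policy _) (ltW eps0) (Uplus_ge _ N1t)).
  apply: ler_wpM2r; first by rewrite mulr_ge0 ?subr_ge0 ?expR_ge1 ?mulr_ge0 // ltW.
  exact: nondecreasing_from pit_up _ Nt.
by rewrite leNgt hN3 // leq_addl.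
Qed.

Lemma Vlim_eq_opt s : Vlim s = V pistar s.
Proof.
have hps := pistar_opt.1.
apply: le_anti; apply/andP; split.
  apply: limr_le; first exact: V_eg_iter_cvg.
  by apply: nearW => t; exact: pistar_opt.2 _ (eg_iter_policy t) s.
rewrite -subr_le0 -(pmulr_rle0 _ one_sub_gamma_gt0).
apply: (Ppi_max_principle (W := fun s => V pistar s - Vlim s) hps) => s1.
rewrite add0r (V_bellman hps s1).
have := sum_pi_Qform Vlim pistar s1.
have : \sum_a pistar s1 a * (r s1 a + gamma * \sum_s' P s1 a s' * Vlim s') <= Vlim s1.
  apply: le_trans (_ : \sum_a pistar s1 a * Vlim s1 <= _); last first.
    by rewrite -mulr_suml (proj2 (hps s1)) mul1r.
  apply: ler_sum => a _; apply: ler_wpM2l; first by case: (hps s1).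
  by have := Ulim_le0 s1 a; rewrite /Ulim; lra.
under [X in _ <= gamma * X]eq_bigr do rewrite mulrBr.
rewrite sumrB; lra.
Qed.

Lemma U_eg_iter_cvg_opt s a : (fun t => U (pit t) s a) @ \oo --> U pistar s a.
Proof.
suff -> : U pistar s a = Ulim s a by exact: U_eg_iter_cvg.
rewrite /Ulim /Uf /Qf Vlim_eq_opt; congr (_ + _ * _ - _).
by apply: eq_bigr => s1 _; rewrite Vlim_eq_opt.
Qed.

Section Rate.
Hypothesis pistar_unique :
  forall pi, optimal P r gamma pi -> forall s a, pi s a = pistar s a.
Variables (rho : S -> R) (dmin : R).
Hypothesis rho_ge0 : forall s, 0 <= rho s.
Hypothesis rho_sum1 : \sum_s rho s = 1.
Hypothesis dmin_gt0 : 0 < dmin.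
Hypothesis dvisit_ge :
  forall pi, full_support pi -> forall s, dmin <= dvisit P gamma rho pi s.

Definition gap t := Vrho P r gamma rho pistar - Vrho P r gamma rho (pit t).

Lemma gapE t : gap t = \sum_s rho s * (V pistar s - V (pit t) s).
Proof. by rewrite /gap /Vrho -sumrB; apply: eq_bigr => s _; rewrite mulrBr. Qed.

Lemma gap_ge0 t : 0 <= gap t.
Proof.
rewrite gapE; apply: sumr_ge0 => s _; apply: mulr_ge0 => //.
by rewrite subr_ge0; exact: pistar_opt.2 _ (eg_iter_policy t) s.
Qed.

Lemma gap_le t : gap t <= (1 - gamma)^-1.
Proof.
rewrite gapE; apply: le_trans (_ : _ <= \sum_s rho s * (1 - gamma)^-1) _.
  apply: ler_sum => s _; apply: ler_wpM2l => //.
  by have := V_le s pistar_opt.1; have := V_ge0 s (eg_iter_policy t); lra.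
by rewrite -mulr_suml rho_sum1 mul1r.
Qed.

Lemma gap_le_max_Uplus t m : (forall s b, Uplus (pit t) s b <= m) ->
  (1 - gamma) * gap t <= m.
Proof.
move=> Um; rewrite gapE mulr_sumr.
apply: le_trans (_ : _ <= \sum_s rho s * m) _; last first.
  by rewrite -mulr_suml rho_sum1 mul1r.
apply: ler_sum => s _; rewrite mulrCA; apply: ler_wpM2l => //.
apply: suboptimality_le_max_U pistar_opt.1 _ s => s1 b.
exact: le_trans (U_le_Uplus _ _ _) (Um s1 b).
Qed.

Lemma gain_le_gap_diff t s :
  dmin * gain (pit t) (pit t.+1) s <= (1 - gamma) * (gap t - gap t.+1).
Proof.
have -> : gap t - gap t.+1 = Vrho P r gamma rho (pit t.+1) - Vrho P r gamma rho (pit t).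
  by rewrite /gap; ring.
have gain0 s1 : 0 <= gain (pit t) (pit t.+1) s1.
  exact: gain_eg_step_ge0 (eg_iter_policy t).
apply: le_trans (dvisit_mul_gain_le _ rho_ge0 rho_sum1 (eg_iter_policy _) gain0).
by apply: ler_wpM2r => //; exact: (dvisit_ge (eg_iter_full_support _) s).
Qed.

Lemma eventually_Uplus_suboptimal_eq0 : exists (astar : S -> A) (T : nat),
  forall t, (T <= t)%N -> forall s b, b != astar s -> Uplus (pit t) s b = 0.
Proof.
have [astar Ha] := fin_all_exists (opt_action_gap pistar_opt pistar_unique).
have ev : \forall t \near \oo, forall i : S * A,
    i.2 != astar i.1 -> U (pit t) i.1 i.2 < 0.
  apply: filter_forall => -[s b] /=.
  have [_|ba] := eqVneq b (astar s); first exact: nearW.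
  apply: filterS (cvgr_lt _ (@U_eg_iter_cvg_opt s b) _ (Ha s b ba)).
  by move=> t U0 _.
have [T HT] := nearinfty_ex ev; exists astar, T => t Tt s b ba.
by rewrite /Uplus maxEle ltW //; exact: HT t Tt (s, b) ba.
Qed.

Lemma eventually_opt_action_prob_ge (astar : S -> A) T :
  (forall t, (T <= t)%N -> forall s b, b != astar s -> Uplus (pit t) s b = 0) ->
  exists2 p, 0 < p & forall t, (T <= t)%N -> forall s, p <= pit t s (astar s).
Proof.
move=> U0.
have [p p0 pT] :=
  finite_pos_lower_bound (fun s => (eg_iter_full_support T).2 s (astar s)).
exists p => // t Tt s; apply: le_trans (pT s) _.
apply: (nondecreasing_from (u := fun t => pit t s (astar s))) Tt => t' Tt' /=.
apply: eg_step_ge_of_max (eg_iter_policy t') _ => b.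
by have [->//|ba] := eqVneq b (astar s); rewrite U0 // Uplus_ge0.
Qed.

Lemma gap_decrease_at t s0 b0 (p : R) : 0 < p ->
  (forall s b, Uplus (pit t) s b <= Uplus (pit t) s0 b0) ->
  p * (eta * Uplus (pit t) s0 b0 ^+ 2) <= eg_h (pit t) s0 ->
  gap t.+1 <= gap t - dmin * p * eta / Zmax * (1 - gamma) * gap t ^+ 2.
Proof.
move=> p0 Umax h_ge; set m := Uplus (pit t) s0 b0 in Umax h_ge.
pose q := dmin * p * eta / Zmax.
have q0 : 0 < q by rewrite /q !(mulr_gt0, divr_gt0, invr_gt0, Zmax_gt0).
have gain_ge : q * m ^+ 2 <= dmin * gain (pit t) (pit t.+1) s0.
  have -> : q * m ^+ 2 = dmin * (p * (eta * m ^+ 2) / Zmax) by rewrite /q; ring.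
  apply: ler_wpM2l; first exact: ltW.
  apply: le_trans (eg_h_div_Zmax_le_gain s0 (eg_iter_policy t)).
  by apply: ler_wpM2r => //; rewrite invr_ge0 ltW ?Zmax_gt0.
have sq : ((1 - gamma) * gap t) ^+ 2 <= m ^+ 2.
  have gap_m : (1 - gamma) * gap t <= m by exact: gap_le_max_Uplus.
  have gap0 : 0 <= (1 - gamma) * gap t.
    by rewrite mulr_ge0 ?gap_ge0 ?ltW ?one_sub_gamma_gt0.
  by rewrite !expr2 ler_pM.
have := le_trans (ler_wpM2l (ltW q0) sq) (le_trans gain_ge (gain_le_gap_diff t s0)).
have -> : q * ((1 - gamma) * gap t) ^+ 2 =
          (1 - gamma) * (q * (1 - gamma) * gap t ^+ 2) by ring.
by rewrite ler_pM2l ?one_sub_gamma_gt0 // -/q; lra.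
Qed.

Lemma gap_decrease : exists2 k, 0 < k &
  exists T, forall t, (T <= t)%N -> gap t.+1 <= gap t - k * gap t ^+ 2.
Proof.
have [astar [T U0]] := eventually_Uplus_suboptimal_eq0.
have [p p0 pT] := eventually_opt_action_prob_ge U0.
have /card_gt0P[s00 _] : (0 < #|S|)%N.
  rewrite lt0n; apply: contra_eqN rho_sum1 => /eqP/card0_eq S0.
  by rewrite big_pred0 // eq_sym oner_eq0.
exists (dmin * p * eta / Zmax * (1 - gamma)).
  by rewrite !(mulr_gt0, divr_gt0, invr_gt0, Zmax_gt0, one_sub_gamma_gt0).
exists T => t Tt; have hpi := eg_iter_policy t.
have [[s0 b0] Umax] := finite_argmax (fun i => Uplus (pit t) i.1 i.2) (s00, astar s00).
apply: (gap_decrease_at p0 (fun s b => Umax (s, b))).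
have [b0a|b0a] := eqVneq b0 (astar s0); last first.
  by rewrite U0 // expr0n mulr0 mulr0 eg_h_ge0.
apply: le_trans (eg_h_ge_sq s0 b0 hpi); apply: ler_wpM2r.
  by rewrite mulr_ge0 ?sqr_ge0 // ltW.
by rewrite b0a; exact: pT.
Qed.

Lemma eg_gap_rate : exists C, forall t, (0 < t)%N -> gap t <= C / t%:R.
Proof.
have [k k0 [T dec]] := gap_decrease.
exact: quadratic_decrease_rate k0 gap_ge0 gap_le dec.
Qed.

End Rate.

End Trajectory.
End ExponentiatedGradient.
End MDP.

Theorem corollary2 (R : realType) (S A : finType)
    (P : S -> A -> S -> R) (r : S -> A -> R) (gamma : R) (rho : S -> R)
    (pistar : policy R S A) :
  (forall s a s', 0 <= P s a s') ->
  (forall s a, \sum_s' P s a s' = 1) ->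
  (forall s a, 0 <= r s a <= 1) ->
  0 <= gamma < 1 ->
  (forall s, 0 <= rho s) -> \sum_s rho s = 1 ->
  optimal P r gamma pistar ->
  (forall pi, optimal P r gamma pi -> forall s a, pi s a = pistar s a) ->
  (exists dmin : R, 0 < dmin /\
     forall pi, full_support pi -> forall s, dmin <= dvisit P gamma rho pi s) ->
  forall theta0 : S -> A -> R,
  exists eta0 : R, 0 < eta0 /\
    forall eta : R, 0 < eta <= eta0 ->
    exists C : R, forall t : nat, (0 < t)%N ->
      Vrho P r gamma rho pistar
        - Vrho P r gamma rho (eg_iter P r gamma eta (softmax theta0) t)
      <= C / t%:R.
Proof.
move=> P_ge0 P_sum1 r_01 gamma_01 rho_ge0 rho_sum1 pistar_opt pistar_unique.
move=> [dmin [dmin_gt0 dvisit_ge]] theta0.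
have pi0_full := softmax_full_support theta0 (policy_card_actions_gt0 pistar_opt.1).
(* The argument works for every step size, so any [eta0] will do. *)
exists 1; split=> // eta /andP[eta_gt0 _].
exact: (eg_gap_rate P_ge0 P_sum1 r_01 gamma_01 eta_gt0 pistar_opt pi0_full
  pistar_unique rho_ge0 rho_sum1 dmin_gt0 dvisit_ge).
Qed.
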